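(* Let $\lambda$ be a partition of $n$ and $\lambda'$ its conjugate partition. Then for every integer $m$, $$|\mathrm{QYT}_{=m}(\lambda)|=|\mathrm{QYT}_{=(n+1)-m}(\lambda')|.$$
   Context: A partition $\lambda=(\lambda_1\ge\cdots\ge\lambda_k>0)$ of $n$ has (French) Young diagram with $\lambda_j$ left-justified boxes in row $j$, rows numbered from bottom to top; the conjugate partition $\lambda'$ is the partition whose diagram is obtained by reflecting that of $\lambda$ across the main diagonal (so $\lambda'_i$ is the number of boxes in column $i$ of $\lambda$). A semistandard Young tableau (SSYT) of shape $\lambda$ is a filling of the boxes with positive integers weakly increasing left to right along rows and strictly increasing bottom to top along columns. An SSYT $T$ is quasi-Yamanouchi if for every integer $i>1$ appearing in $T$, the leftmost occurrence of $i$ lies in a column weakly left of (column index $\le$) some occurrence of $i-1$. $\mathrm{QYT}_{=m}(\lambda)$ is the set of quasi-Yamanouchi tableaux of shape $\lambda$ whose largest entry is exactly $m$. *)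

From mathcomp Require Import all_boot.
From mathcomp Require Import all_order all_algebra.
Set Implicit Arguments. Unset Strict Implicit. Unset Printing Implicit Defensive.

Definition is_partition (la : seq nat) : bool :=
  sorted geq la && all (fun x => 0 < x) la.

Definition conj_part (la : seq nat) : seq nat :=
  mkseq (fun i => count (fun x => i < x) la) (head 0 la).

(* A filling t : seq (seq nat); t`_j is row j (0-indexed, from the bottom,
   French convention); its i-th element is the entry in column i. *)
Definition entry (t : seq (seq nat)) (c : nat * nat) : nat :=
  nth 0 (nth [::] t c.1) c.2.

Definition cells (t : seq (seq nat)) : seq (nat * nat) :=
  [seq (r, c) | r <- iota 0 (size t), c <- iota 0 (size (nth [::] t r))].

Definition shape (t : seq (seq nat)) : seq nat := map size t.

Definition is_SSYT (la : seq nat) (t : seq (seq nat)) : bool :=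
  [&& shape t == la,
      all (fun c => 0 < entry t c) (cells t),
      all (fun r => sorted leq r) t &
      all (fun c => (c.1.+1 < size t) && (c.2 < size (nth [::] t c.1.+1))
                      ==> (entry t c < entry t (c.1.+1, c.2))) (cells t)].

Definition occ_cols (t : seq (seq nat)) (v : nat) : seq nat :=
  [seq c.2 | c <- cells t & entry t c == v].

(* column of the leftmost occurrence of v (meaningful when v occurs) *)
Definition leftmost_col (t : seq (seq nat)) (v : nat) : nat :=
  let s := occ_cols t v in foldr minn (head 0 s) s.

Definition entries (t : seq (seq nat)) : seq nat := [seq entry t c | c <- cells t].

Definition is_QY (t : seq (seq nat)) : bool :=
  all (fun v => (1 < v) ==>
         has (fun c' => leftmost_col t v <= c') (occ_cols t v.-1))
      (entries t).

Definition max_entry (t : seq (seq nat)) : nat := foldr maxn 0 (entries t).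

Definition is_QYT_eq (m : nat) (la : seq nat) (t : seq (seq nat)) : bool :=
  [&& is_SSYT la t, is_QY t & max_entry t == m].

Fixpoint rows_upto (k m : nat) : seq (seq nat) :=
  if k is k'.+1 then [seq x :: r | x <- iota 1 m, r <- rows_upto k' m]
  else [:: [::]].

Definition fillings (la : seq nat) (m : nat) : seq (seq (seq nat)) :=
  foldr (fun k acc => [seq r :: t | r <- rows_upto k m, t <- acc]) [:: [::]] la.

(* |QYT_{=m}(la)| for a natural m: every tableau with largest entry m
   has all entries in {1..m}, so it occurs exactly once in fillings la m. *)
Definition nQYT_nat (la : seq nat) (m : nat) : nat :=
  count (is_QYT_eq m la) (fillings la m).

Definition nQYT (la : seq nat) (m : int) : nat :=
  match m with Posz k => nQYT_nat la k | Negz _ => 0 end.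

From Pilot Require Import Defs.
From mathcomp Require Import all_boot all_order all_algebra.
From mathcomp Require Import zify.
Set Implicit Arguments. Unset Strict Implicit. Unset Printing Implicit Defensive.

(* Standardization (label the cells by increasing entry, ties broken left to
   right) maps a quasi-Yamanouchi tableau of shape la with largest entry m to a
   standard tableau of shape la with m - 1 descents, where i is a descent when
   i + 1 lies in a strictly higher row; the quasi-Yamanouchi condition is what
   makes destandardization (entry of the cell labelled i = 1 + number of
   descents before i) invert it.  In a standard tableau, the cell labelled
   i + 1 lies either strictly higher or strictly to the right of the cell
   labelled i, never both, so transposition turns a standard tableau of shape
   la with d descents into one of shape la' with n - 1 - d descents.  The
   composite injects QYT_{=m}(la) into QYT_{=n+1-m}(la'), and applying the same
   to la' gives equality. *)

Definition diagram (la : seq nat) : seq (nat * nat) :=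
  [seq (r, c) | r <- iota 0 (size la), c <- iota 0 (nth 0 la r)].

Lemma mem_diagram la x : (x \in diagram la) = (x.2 < nth 0 la x.1).
Proof.
case: x => r c /=; apply/allpairsPdep/idP.
  by case=> r' [c' [_]]; rewrite mem_iota => /andP[_]; rewrite add0n => H [-> ->].
move=> H; exists r, c; rewrite !mem_iota /= !add0n H; split=> //.
by case: (ltnP r (size la)) => // Hr; move: H; rewrite nth_default.
Qed.

Lemma diagram_uniq la : uniq (diagram la).
Proof.
apply: allpairs_uniq_dep; first exact: iota_uniq.
  by move=> r _; exact: iota_uniq.
by move=> [a b] [c d] _ _ /= [-> ->].
Qed.

Lemma size_diagram la : size (diagram la) = sumn la.
Proof.
rewrite size_allpairs_dep (eq_map (fun r => size_iota 0 (nth 0 la r))).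
by rewrite -/(mkseq _ _) mkseq_nth.
Qed.

Lemma cells_diagram t : cells t = diagram (Defs.shape t).
Proof.
rewrite /cells /diagram /Defs.shape size_map.
congr flatten; apply/eq_in_map => r; rewrite mem_iota => /andP[_ Hr].
by rewrite (nth_map [::]).
Qed.

Lemma mem_diagram_row la r c : (r, c) \in diagram la -> r < size la.
Proof.
rewrite mem_diagram /=; case: (ltnP r (size la)) => // Hr.
by rewrite nth_default.
Qed.

Definition weakly_decreasing (la : seq nat) :=
  forall r r', r <= r' -> nth 0 la r' <= nth 0 la r.

Lemma diagram_lower la r r' c c' : weakly_decreasing la ->
  (r, c) \in diagram la -> r' <= r -> c' <= c -> (r', c') \in diagram la.
Proof.
rewrite !mem_diagram /= => Hla Hrc Hr Hc.
by apply: leq_ltn_trans Hc _; apply: leq_trans Hrc (Hla _ _ Hr).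
Qed.

Lemma count_gt_sorted la r c : sorted geq la ->
  (r < count (fun x => c < x) la) = (c < nth 0 la r).
Proof.
elim: la r => [|a s IH] r /=; first by rewrite nth_nil.
move=> Hp; have Hs := path_sorted Hp.
have /allP Hsa := order_path_min (rev_trans leq_trans) Hp.
case: (ltnP c a) => Hca.
  by case: r => [|r] //=; rewrite add1n ltnS IH.
have Hsc x : x \in s -> (c < x) = false.
  by move=> /Hsa /= Hxa; apply/negbTE; rewrite -leqNgt (leq_trans Hxa).
rewrite (eq_in_count Hsc) count_pred0 /=.
case: r => [|r] /=; first by apply/esym/negbTE; rewrite -leqNgt.
case: (ltnP r (size s)) => Hr; last by rewrite nth_default.
by rewrite Hsc // mem_nth.
Qed.

Definition conjugate_shapes (la mu : seq nat) :=
  forall r c, (c < nth 0 la r) = (r < nth 0 mu c).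

Lemma nth_conj_part la c : sorted geq la ->
  nth 0 (conj_part la) c = count (fun x => c < x) la.
Proof.
move=> Hs; rewrite /conj_part; case: (ltnP c (head 0 la)) => Hc.
  by rewrite nth_mkseq.
rewrite nth_default ?size_mkseq //; apply/esym/eqP.
rewrite -leqn0 leqNgt count_gt_sorted //.
by case: la {Hs} Hc => [|a s] //= Hc; rewrite -leqNgt.
Qed.

Lemma conj_part_conjugate la : is_partition la -> conjugate_shapes la (conj_part la).
Proof. by case/andP=> Hs _ r c; rewrite nth_conj_part // count_gt_sorted. Qed.

Lemma conjugate_sym la mu : conjugate_shapes la mu -> conjugate_shapes mu la.
Proof. by move=> H r c; rewrite H. Qed.

Lemma conjugate_weakly_decreasing la mu :
  conjugate_shapes la mu -> weakly_decreasing mu.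
Proof.
move=> T c c' Hc; case: (posnP (nth 0 mu c')) => [->//|Hp].
have : (nth 0 mu c').-1 < nth 0 mu c' by rewrite prednK.
by rewrite -T => /(leq_ltn_trans Hc); rewrite T -ltnS prednK.
Qed.

Definition tr_cell (x : nat * nat) := (x.2, x.1).

Lemma tr_cellK : involutive tr_cell. Proof. by case. Qed.

Lemma tr_cell_inj : injective tr_cell. Proof. exact: inv_inj tr_cellK. Qed.

Lemma mem_diagram_tr la mu x :
  conjugate_shapes la mu -> (tr_cell x \in diagram mu) = (x \in diagram la).
Proof. by case: x => r c T; rewrite !mem_diagram /= T. Qed.

Lemma perm_diagram_tr la mu :
  conjugate_shapes la mu -> perm_eq (map tr_cell (diagram la)) (diagram mu).
Proof.
move=> T; apply: uniq_perm.
- by rewrite (map_inj_uniq tr_cell_inj) diagram_uniq.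
- exact: diagram_uniq.
move=> y; rewrite -{2}(tr_cellK y) (mem_diagram_tr _ T).
by rewrite -{1}(tr_cellK y) (mem_map tr_cell_inj).
Qed.

Lemma size_diagram_conjugate la mu :
  conjugate_shapes la mu -> size (diagram mu) = size (diagram la).
Proof. by move=> T; rewrite -(perm_size (perm_diagram_tr T)) size_map. Qed.

Definition descent (a b : nat * nat) : bool := a.1 < b.1.

(* [descents w k] counts the descents among the first k + 1 letters of [w]. *)
Fixpoint descents (w : seq (nat * nat)) (k : nat) : nat :=
  if k is k'.+1 then descents w k' + descent (nth (0, 0) w k') (nth (0, 0) w k)
  else 0.

Definition destandardize (w : seq (nat * nat)) (x : nat * nat) : nat :=
  (descents w (index x w)).+1.

Definition std_le (f : nat * nat -> nat) (x y : nat * nat) : bool :=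
  (f x < f y) || ((f x == f y) && (x.2 <= y.2)).

Definition standardize (la : seq nat) (f : nat * nat -> nat) : seq (nat * nat) :=
  sort (std_le f) (diagram la).

(* A standard tableau of shape [la] is recorded as the list of its cells in
   the order of their labels. *)
Definition standard (la : seq nat) (w : seq (nat * nat)) : Prop :=
  perm_eq w (diagram la) /\
  forall x y, x \in diagram la -> y \in diagram la -> x.1 <= y.1 -> x.2 <= y.2 ->
    index x w <= index y w.

(* [is_QYT_eq m la] for fillings given as functions on the cells; in [qy_yam],
   [z] stands for the leftmost occurrence of the entry [f x]. *)
Record qy_map (la : seq nat) (m : nat) (f : nat * nat -> nat) : Prop := QyMap {
  qy_pos : forall x, x \in diagram la -> 0 < f x;
  qy_row : forall r c, (r, c.+1) \in diagram la -> f (r, c) <= f (r, c.+1);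
  qy_col : forall r c, (r.+1, c) \in diagram la -> (r, c) \in diagram la ->
    f (r, c) < f (r.+1, c);
  qy_yam : forall x, x \in diagram la -> 1 < f x -> exists z y,
    [/\ z \in diagram la, y \in diagram la, f z = f x, f y = (f x).-1 & z.2 <= y.2];
  qy_le_max : forall x, x \in diagram la -> f x <= m;
  qy_max : exists2 x, x \in diagram la & f x = m }.

Lemma qy_diagram_nonempty la m f : qy_map la m f -> 0 < size (diagram la).
Proof. by case=> _ _ _ _ _ [x Hx _]; case: (diagram la) Hx. Qed.

Lemma std_le_total f : total (std_le f).
Proof. by move=> x y; rewrite /std_le; lia. Qed.

Lemma std_le_trans f : transitive (std_le f).
Proof. by move=> y x z; rewrite /std_le; lia. Qed.

Lemma std_le_refl f : reflexive (std_le f).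
Proof. by move=> x; rewrite /std_le eqxx leqnn orbT. Qed.

Lemma leq_descents w k k' : k <= k' -> descents w k <= descents w k'.
Proof.
elim: k' => [|k' IH]; first by rewrite leqn0 => /eqP->.
rewrite leq_eqVlt => /orP[/eqP->//|]; rewrite ltnS => /IH /= H.
exact: leq_trans H (leq_addr _ _).
Qed.

Lemma descents_leq w k : descents w k <= k.
Proof. by elim: k => //= k IH; case: descent; lia. Qed.

Lemma last_descent w k : 0 < descents w k -> exists2 j, j < k &
  descent (nth (0, 0) w j) (nth (0, 0) w j.+1) /\ descents w j.+1 = descents w k.
Proof.
elim: k => [|k IH] //=; case Hd: descent => /=; first by exists k; rewrite ?Hd.
by rewrite addn0 => /IH [j Hj Hdj]; exists j => //; apply: ltnW.
Qed.

Section Standard.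
Variable la : seq nat.
Hypothesis Hla : weakly_decreasing la.
Local Notation C := (diagram la).
Local Notation n := (size (diagram la)).
Local Notation "w `[ i ]" := (nth (0, 0) w i) (at level 2).

Section Steps.
Variable f : nat * nat -> nat.
Hypothesis Hrow : forall r c, (r, c.+1) \in C -> f (r, c) <= f (r, c.+1).
Hypothesis Hcol : forall r c, (r.+1, c) \in C -> (r, c) \in C -> f (r, c) < f (r.+1, c).

Lemma ltn_col x y : x \in C -> y \in C -> x.2 = y.2 -> x.1 < y.1 -> f x < f y.
Proof.
move: x y => [r c] [r' c'] _ + /= Ec; rewrite -{c'}Ec /=.
elim: r' => // r' IH Hr'.
have Hr : (r', c) \in C by apply: diagram_lower Hla Hr' _ _.
rewrite ltnS leq_eqVlt => /orP[/eqP->|Hlt]; first exact: Hcol.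
exact: ltn_trans (IH Hr Hlt) (Hcol Hr' Hr).
Qed.

Lemma col_inj x y : x \in C -> y \in C -> f x = f y -> x.2 = y.2 -> x = y.
Proof.
move=> Hx Hy Ef E2; case: (ltngtP x.1 y.1) => H1.
- by have := ltn_col Hx Hy E2 H1; rewrite Ef ltnn.
- by have := ltn_col Hy Hx (esym E2) H1; rewrite Ef ltnn.
- by move: H1 E2; case: (x) => a b; case: (y) => c d /= -> ->.
Qed.

Lemma std_le_anti : {in C &, antisymmetric (std_le f)}.
Proof.
move=> x y Hx Hy; rewrite /std_le => H.
have Ef : f x = f y by lia.
by apply: col_inj => //; move: H; rewrite Ef ltnn eqxx /=; lia.
Qed.

Lemma leq_row r c c' : (r, c') \in C -> c <= c' -> f (r, c) <= f (r, c').
Proof.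
elim: c' => [|c' IH] Hc'; first by rewrite leqn0 => /eqP->.
have Hr : (r, c') \in C by apply: diagram_lower Hla Hc' _ _.
rewrite leq_eqVlt ltnS => /orP[/eqP->//|Hle].
exact: leq_trans (IH Hr Hle) (Hrow Hc').
Qed.

Lemma leq_cells x y : x \in C -> y \in C -> x.1 <= y.1 -> x.2 <= y.2 -> f x <= f y.
Proof.
move: x y => [r c] [r' c'] /= Hx Hy Hr Hc.
have Hm : (r, c') \in C by apply: diagram_lower Hla Hy Hr _.
apply: leq_trans (leq_row Hm Hc) _.
move: Hr; rewrite leq_eqVlt => /orP[/eqP->//|Hr].
exact/ltnW/ltn_col.
Qed.
End Steps.

Section StandardWord.
Variable w : seq (nat * nat).
Hypothesis Sw : standard la w.

Lemma standard_uniq : uniq w.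
Proof. by rewrite (perm_uniq Sw.1) diagram_uniq. Qed.

Lemma size_standard : size w = n.
Proof. exact: perm_size Sw.1. Qed.

Lemma mem_standard x : (x \in w) = (x \in C).
Proof. by rewrite (perm_mem Sw.1). Qed.

Lemma nth_standard i : i < n -> w`[i] \in C.
Proof. by move=> Hi; rewrite -mem_standard mem_nth // size_standard. Qed.

Lemma index_nth_standard i : i < n -> index w`[i] w = i.
Proof. by move=> Hi; rewrite index_uniq ?size_standard ?standard_uniq. Qed.

Lemma index_standard x : x \in C -> index x w < n.
Proof. by move=> Hx; rewrite -size_standard index_mem mem_standard. Qed.

Lemma nth_index_standard x : x \in C -> w`[index x w] = x.
Proof. by move=> Hx; rewrite nth_index // mem_standard. Qed.

Lemma descent_standardE i : i.+1 < n ->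
  descent w`[i] w`[i.+1] = ~~ (w`[i].2 < w`[i.+1].2).
Proof.
move=> Hi; have Ha := nth_standard (ltnW Hi); have Hb := nth_standard Hi.
have ia := index_nth_standard (ltnW Hi); have ib := index_nth_standard Hi.
move: Ha Hb ia ib; case: (w`[i]) => r1 c1; case: (w`[i.+1]) => r2 c2 /= Ha Hb ia ib.
rewrite /descent /=; case: (ltnP r1 r2) => H1; case: (ltnP c1 c2) => H2 //=.
- (* The cell (r2, c1) would have to come strictly between the two. *)
  have Hp : (r2, c1) \in C by apply: diagram_lower Hla Hb _ (ltnW H2).
  have L1 := Sw.2 _ _ Ha Hp (ltnW H1) (leqnn _).
  have L2 := Sw.2 _ _ Hp Hb (leqnn _) (ltnW H2).
  rewrite ia ib in L1 L2.
  have [E|E] : index (r2, c1) w = i \/ index (r2, c1) w = i.+1 by lia.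
  + have := nth_index_standard Hp.
    by rewrite E -{1}ia (nth_index_standard Ha) => -[] E'; lia.
  + have := nth_index_standard Hp.
    by rewrite E -{1}ib (nth_index_standard Hb) => -[] E'; lia.
- by have := Sw.2 _ _ Hb Ha H1 H2; rewrite ia ib; lia.
Qed.

Lemma descents_const_col i j : i + j < n -> descents w (i + j) = descents w i ->
  w`[i].2 + j <= w`[i + j].2.
Proof.
elim: j => [|j IH]; first by rewrite !addn0.
rewrite addnS /= => Hn HD.
have HD' : descents w (i + j) = descents w i.
  by have := leq_descents w (leq_addr j i); move: HD; lia.
have : ~~ descent w`[i + j] w`[(i + j).+1].
  by move: HD; rewrite /= HD'; case: descent => //=; lia.
rewrite descent_standardE // negbK => Hc.
by have := IH (ltnW Hn) HD'; lia.
Qed.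

Lemma destandardize_row r c :
  (r, c.+1) \in C -> destandardize w (r, c) <= destandardize w (r, c.+1).
Proof.
move=> Hb; have Ha : (r, c) \in C by apply: diagram_lower Hla Hb _ _.
by rewrite ltnS; apply/leq_descents/Sw.2.
Qed.

Lemma destandardize_col r c : (r.+1, c) \in C -> (r, c) \in C ->
  destandardize w (r, c) < destandardize w (r.+1, c).
Proof.
move=> Hb Ha; rewrite ltnS.
have Lij : index (r, c) w <= index (r.+1, c) w by apply: Sw.2.
have Ei := nth_index_standard Ha; have Ej := nth_index_standard Hb.
have Hj := index_standard Hb.
move: Lij Ei Ej Hj; set i := index (r, c) w; set j := index (r.+1, c) w.
move=> Lij Ei Ej Hj; rewrite ltn_neqAle leq_descents // andbT.
apply/negP => /eqP E; have := @descents_const_col i (j - i).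
rewrite subnKC // Ei Ej => /(_ Hj (esym E)) /= Hc.
have Eij : i = j by lia.
by move: Ej; rewrite -Eij Ei => -[]; lia.
Qed.

Lemma destandardize_qy : 0 < n -> qy_map la (descents w n.-1).+1 (destandardize w).
Proof.
move=> Hn; split.
- by [].
- exact: destandardize_row.
- exact: destandardize_col.
- move=> x Hx; rewrite ltnS => /last_descent [j Hj [Hd HDj]].
  have Hj1 : j.+1 < n by have := index_standard Hx; lia.
  exists w`[j.+1], w`[j]; split.
  + exact: nth_standard.
  + exact/nth_standard/ltnW.
  + by rewrite /destandardize index_nth_standard // HDj.
  + by rewrite /destandardize index_nth_standard ?(ltnW Hj1) // -HDj /= Hd addn1.
  + by move: Hd; rewrite descent_standardE // -leqNgt.
- by move=> x Hx; rewrite ltnS; apply: leq_descents; have := index_standard Hx; lia.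
- exists w`[n.-1]; first by apply: nth_standard; lia.
  by rewrite /destandardize index_nth_standard //; lia.
Qed.

Lemma sort_destandardize h : {in C, h =1 destandardize w} -> sort (std_le h) C = w.
Proof.
move=> Hh.
have Hs : sorted (std_le h) w.
  apply/(sortedP (0, 0)) => i; rewrite size_standard => Hi.
  have Ha := nth_standard (ltnW Hi); have Hb := nth_standard Hi.
  rewrite /std_le !Hh // /destandardize !index_nth_standard ?(ltnW Hi) //=.
  have := descent_standardE Hi; case: descent => /= [_|/esym/negbFE Hc].
    by rewrite addn1 ltnSn.
  by rewrite addn0 ltnn eqxx ltnW.
rewrite -(sorted_sort (@std_le_trans h) Hs).
apply/(perm_sort_inP (s1 := C)).
- by move=> x y _ _; exact: std_le_total.
- by move=> x y z _ _ _; exact: std_le_trans.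
- move=> x y Hx Hy; rewrite /std_le !Hh //.
  exact: (std_le_anti (@destandardize_col)).
- by rewrite perm_sym; case: Sw.
Qed.
End StandardWord.

Section Standardize.
Variables (m : nat) (f : nat * nat -> nat).
Hypothesis Q : qy_map la m f.
Local Notation w := (standardize la f).

Lemma std_le_standardize i j : i <= j -> j < n -> std_le f w`[i] w`[j].
Proof.
move=> Hij Hj; have Hs : size w = n by rewrite size_sort.
apply: (sorted_leq_nth (@std_le_trans f) (@std_le_refl f)) => //.
- exact: sort_sorted (@std_le_total f) C.
- by rewrite inE Hs (leq_ltn_trans Hij Hj).
- by rewrite inE Hs.
Qed.

Lemma standard_standardize : standard la w.
Proof.
have Hp : perm_eq w C by rewrite perm_sort.
split=> // x y Hx Hy H1 H2; rewrite leqNgt; apply/negP => Hlt.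
have Hxn : index x w < n by rewrite -(perm_size Hp) index_mem (perm_mem Hp).
have := std_le_standardize (ltnW Hlt) Hxn; rewrite !nth_index ?(perm_mem Hp) //.
have Fxy := leq_cells (qy_row Q) (qy_col Q) Hx Hy H1 H2.
rewrite /std_le ltnNge Fxy => /andP[/eqP Ef H3].
have Exy : x = y.
  by apply: (col_inj (qy_col Q) Hx Hy (esym Ef)); apply/eqP; rewrite eqn_leq H2 H3.
by rewrite Exy ltnn in Hlt.
Qed.

Lemma leq_standardize i j : i <= j -> j < n -> f w`[i] <= f w`[j].
Proof. by move=> Hij /(std_le_standardize Hij); rewrite /std_le; lia. Qed.

(* The quasi-Yamanouchi condition is exactly what forces a descent whenever
   the entry increases between consecutive cells of the standardization. *)
Lemma standardize_step i : i.+1 < n ->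
  f w`[i.+1] = f w`[i] + descent w`[i] w`[i.+1].
Proof.
move=> Hi; have S := standard_standardize.
have Ha := nth_standard S (ltnW Hi); have Hb := nth_standard S Hi.
have Kab := std_le_standardize (leqnSn i) Hi.
have Hidx (u : nat * nat) : u \in C -> w`[index u w] = u by exact: (nth_index_standard S).
case: (ltngtP (f w`[i]) (f w`[i.+1])) => Hab.
- have [z [y [Hz Hy Ez Ey Hzy]]] := qy_yam Q Hb (leq_ltn_trans (qy_pos Q Ha) Hab).
  have Iy : index y w <= i.
    rewrite leqNgt; apply/negP => /(leq_standardize) /(_ (index_standard S Hy)).
    by rewrite Hidx // Ey; have := qy_pos Q Hb; lia.
  have Ea : f w`[i] = f y.
    by have := leq_standardize Iy (ltnW Hi); rewrite Hidx //; lia.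
  have Iz : i < index z w.
    rewrite ltnNge; apply/negP => /(leq_standardize) /(_ (ltnW Hi)).
    by rewrite Hidx // Ez; lia.
  have := std_le_standardize Iz (index_standard S Hz).
  have := std_le_standardize Iy (ltnW Hi).
  rewrite !Hidx // /std_le Ea Ez !ltnn !eqxx /= => Hyi Hiz.
  have -> : descent w`[i] w`[i.+1].
    by rewrite descent_standardE // -leqNgt (leq_trans Hiz (leq_trans Hzy Hyi)).
  by have := qy_pos Q Hb; lia.
- by move: Kab; rewrite /std_le ltnNge (ltnW Hab) /=; lia.
- have E : w`[i].2 <= w`[i.+1].2 by move: Kab; rewrite /std_le Hab ltnn eqxx.
  suff /negbTE-> : ~~ descent w`[i] w`[i.+1] by rewrite addn0.
  rewrite descent_standardE // negbK ltn_neqAle E andbT; apply/eqP => E2.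
  have Ew := col_inj (qy_col Q) Ha Hb Hab E2.
  by have := index_nth_standard S Hi; rewrite -Ew index_nth_standard //; lia.
Qed.

Lemma standardize_head : f w`[0] = 1.
Proof.
have Hn := qy_diagram_nonempty Q; have S := standard_standardize.
have H0 := nth_standard S Hn.
case: (ltnP 1 (f w`[0])) => H1; last by have := qy_pos Q H0; lia.
have [z [y [Hz Hy Ez Ey Hzy]]] := qy_yam Q H0 H1.
have := leq_standardize (leq0n (index y w)) (index_standard S Hy).
by rewrite nth_index_standard // Ey; lia.
Qed.

Lemma standardize_nth k : k < n -> f w`[k] = (descents w k).+1.
Proof.
elim: k => [|k IH] Hk; first by rewrite standardize_head.
by rewrite standardize_step // IH //= ?addSn // ltnW.
Qed.

Lemma destandardize_standardize : {in C, f =1 destandardize w}.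
Proof.
move=> x Hx; have S := standard_standardize.
by rewrite -{1}(nth_index_standard S Hx) standardize_nth // index_standard.
Qed.

Lemma qy_max_descents : m = (descents w n.-1).+1.
Proof.
have Hn := qy_diagram_nonempty Q; have S := standard_standardize.
have Hl : n.-1 < n by rewrite prednK.
have [x0 Hx0 Ex0] := qy_max Q.
have Hx0n : index x0 w <= n.-1 by rewrite -ltnS prednK ?(index_standard S).
rewrite -standardize_nth //; apply/eqP.
rewrite eqn_leq (qy_le_max Q) ?(nth_standard S) //=.
by have := leq_standardize Hx0n Hl; rewrite (nth_index_standard S) // Ex0 andbT.
Qed.

Lemma qy_range : 0 < m <= n.
Proof.
rewrite qy_max_descents.
by have := descents_leq w n.-1; have := qy_diagram_nonempty Q; lia.
Qed.
End Standardize.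
End Standard.

Lemma nth_map_tr (w : seq (nat * nat)) i :
  nth (0, 0) (map tr_cell w) i = tr_cell (nth (0, 0) w i).
Proof. by elim: w i => [|a w IH] [|i] //=. Qed.

Lemma index_map_tr (w : seq (nat * nat)) x :
  index x (map tr_cell w) = index (tr_cell x) w.
Proof. by rewrite -{1}(tr_cellK x) index_map //; exact: tr_cell_inj. Qed.

Definition qy_transpose (la : seq nat) (f : nat * nat -> nat) : nat * nat -> nat :=
  destandardize (map tr_cell (standardize la f)).

Section Transpose.
Variables la mu : seq nat.
Hypothesis T : conjugate_shapes la mu.
Local Notation n := (size (diagram la)).

Let Hla : weakly_decreasing la.
Proof. exact: conjugate_weakly_decreasing (conjugate_sym T). Qed.

Let Hmu : weakly_decreasing mu.
Proof. exact: conjugate_weakly_decreasing T. Qed.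

Lemma standard_tr w : standard la w -> standard mu (map tr_cell w).
Proof.
move=> [Hp Hm]; split; first exact: perm_trans (perm_map _ Hp) (perm_diagram_tr T).
move=> x y Hx Hy H1 H2; rewrite !index_map_tr.
by apply: Hm => //; rewrite -(mem_diagram_tr _ T) tr_cellK.
Qed.

Lemma descents_tr w k : standard la w -> k < n ->
  descents (map tr_cell w) k + descents w k = k.
Proof.
move=> S; elim: k => [//|k IH] Hk /=.
have := descent_standardE Hla S Hk; rewrite !nth_map_tr /descent /= => ->.
by have := IH (ltnW Hk); case: (_ < _) => /=; lia.
Qed.

Lemma qy_transpose_qy m f : qy_map la m f -> qy_map mu (n.+1 - m) (qy_transpose la f).
Proof.
move=> Q; have S := standard_standardize Hla Q.
have Hn := qy_diagram_nonempty Q.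
have Hsz : size (diagram mu) = n := size_diagram_conjugate T.
have := destandardize_qy Hmu (standard_tr S); rewrite Hsz => /(_ Hn).
suff -> : n.+1 - m = (descents (map tr_cell (standardize la f)) n.-1).+1 by [].
have Hl : n.-1 < n by rewrite prednK.
by have := descents_tr S Hl; rewrite (qy_max_descents Hla Q); lia.
Qed.

Lemma qy_transpose_inj m f1 f2 : qy_map la m f1 -> qy_map la m f2 ->
  {in diagram mu, qy_transpose la f1 =1 qy_transpose la f2} -> {in diagram la, f1 =1 f2}.
Proof.
move=> Q1 Q2 E.
have S1 := standard_tr (standard_standardize Hla Q1).
have S2 := standard_tr (standard_standardize Hla Q2).
have E1 := sort_destandardize Hmu S1 (fun x Hx => esym (E x Hx)).
have E2 := sort_destandardize Hmu S2 (h := qy_transpose la f2) (fun x Hx => erefl).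
have Ew : standardize la f1 = standardize la f2.
  by apply: (inj_map tr_cell_inj); rewrite -E1 -E2.
move=> x Hx; rewrite (destandardize_standardize Hla Q1) // Ew.
by rewrite -(destandardize_standardize Hla Q2).
Qed.
End Transpose.

Definition tabulate (f : nat * nat -> nat) (la : seq nat) : seq (seq nat) :=
  [seq [seq f (r, c) | c <- iota 0 (nth 0 la r)] | r <- iota 0 (size la)].

Lemma size_tabulate f la : size (tabulate f la) = size la.
Proof. by rewrite size_map size_iota. Qed.

Lemma nth_tabulate f la r : r < size la ->
  nth [::] (tabulate f la) r = [seq f (r, c) | c <- iota 0 (nth 0 la r)].
Proof. by move=> Hr; rewrite (nth_map 0) ?size_iota // nth_iota. Qed.

Lemma shape_tabulate f la : Defs.shape (tabulate f la) = la.
Proof.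
apply: (@eq_from_nth _ 0); first by rewrite size_map size_tabulate.
move=> r; rewrite size_map size_tabulate => Hr.
by rewrite (nth_map [::]) ?size_tabulate // nth_tabulate // size_map size_iota.
Qed.

Lemma entry_tabulate f la x : x \in diagram la -> entry (tabulate f la) x = f x.
Proof.
case: x => r c Hx; have Hr := mem_diagram_row Hx; move: Hx; rewrite mem_diagram /= => Hc.
by rewrite /entry /= nth_tabulate // (nth_map 0) ?size_iota // nth_iota.
Qed.

Lemma tabulate_entry t : tabulate (entry t) (Defs.shape t) = t.
Proof.
apply: (@eq_from_nth _ [::]); first by rewrite size_tabulate size_map.
move=> r; rewrite size_tabulate size_map => Hr.
rewrite nth_tabulate ?size_map // (nth_map [::]) //.
apply: (@eq_from_nth _ 0); first by rewrite size_map size_iota.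
by move=> c; rewrite size_map size_iota => Hc; rewrite (nth_map 0) ?size_iota // nth_iota.
Qed.

Lemma eq_in_tabulate f g la : {in diagram la, f =1 g} -> tabulate f la = tabulate g la.
Proof.
move=> E; apply/eq_in_map => r; rewrite mem_iota => /andP[_ Hr].
by apply/eq_in_map => c; rewrite mem_iota => /andP[_ Hc]; apply: E; rewrite mem_diagram.
Qed.

Lemma foldr_maxn_leq s b : (foldr maxn 0 s <= b) = all (fun x => x <= b) s.
Proof. by elim: s => //= a s IH; rewrite geq_max IH. Qed.

Lemma leq_foldr_maxn s x : x \in s -> x <= foldr maxn 0 s.
Proof.
move=> Hx; have := foldr_maxn_leq s (foldr maxn 0 s).
by rewrite leqnn => /esym/allP; apply.
Qed.

Lemma foldr_maxn_mem s : s != [::] -> foldr maxn 0 s \in s.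
Proof.
elim: s => // a s IH _; change (maxn a (foldr maxn 0 s) \in a :: s).
case: s IH => [|b s] IH; first by rewrite maxn0 mem_head.
rewrite /maxn; case: ltnP => _; last exact: mem_head.
by rewrite inE IH ?orbT.
Qed.

Lemma foldr_minn_leq d s x : x \in s -> foldr minn d s <= x.
Proof.
elim: s => //= a s IH; rewrite inE => /orP[/eqP->|/IH H]; first exact: geq_minl.
exact: leq_trans (geq_minr _ _) H.
Qed.

Lemma foldr_minn_mem d s : foldr minn d s \in d :: s.
Proof.
elim: s => [|a s IH] /=; first exact: mem_head.
rewrite /minn; case: ltnP => _; first by rewrite !inE eqxx orbT.
by move: IH; rewrite !inE => /orP[->|->]; rewrite ?orbT.
Qed.

Lemma mem_occ_cols t v c :
  (c \in occ_cols t v) = has (fun x => (x.2 == c) && (entry t x == v)) (cells t).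
Proof.
apply/mapP/hasP => [[x]|[x Hx /andP[/eqP<- Hv]]].
  by rewrite mem_filter => /andP[Hv Hx] ->; exists x; rewrite // eqxx.
by exists x; rewrite // mem_filter Hv.
Qed.

Lemma mem_leftmost_col t v : occ_cols t v != [::] -> leftmost_col t v \in occ_cols t v.
Proof.
rewrite /leftmost_col; case: (occ_cols t v) => // a s _ /=.
by have := foldr_minn_mem a (a :: s); rewrite /= inE => /orP[/eqP->|//]; rewrite mem_head.
Qed.

Lemma QYT_qy_map m la t : 0 < size (diagram la) -> is_QYT_eq m la t ->
  Defs.shape t = la /\ qy_map la m (entry t).
Proof.
move=> Hn /and3P[/and4P[/eqP Hsh Hpos Hrows Hcol] Hqy /eqP Hmax].
have Hc : cells t = diagram la by rewrite cells_diagram Hsh.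
rewrite Hc in Hpos Hcol.
have Hrow r : r < size t -> size (nth [::] t r) = nth 0 la r.
  by move=> Hr; rewrite -Hsh (nth_map [::]).
have Hrsz r c : (r, c) \in diagram la -> r < size t.
  by move/mem_diagram_row; rewrite -Hsh size_map.
split=> //; split.
- exact/allP.
- move=> r c H; have Hr := Hrsz _ _ H.
  have Hs : sorted leq (nth [::] t r) by apply: (allP Hrows); rewrite mem_nth.
  move: H; rewrite mem_diagram /= -Hrow // => H.
  by apply: (sorted_leq_nth leq_trans leqnn 0 Hs); rewrite // inE ltnW.
- move=> r c Hb Ha.
  have Hcc : c < size (nth [::] t r.+1).
    by rewrite Hrow ?(Hrsz _ _ Hb) //; move: Hb; rewrite mem_diagram.
  by have := allP Hcol _ Ha; rewrite /= (Hrsz _ _ Hb) Hcc; apply.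
- move=> x Hx H1.
  have Hv : entry t x \in entries t by rewrite /entries map_f // Hc.
  have := allP Hqy _ Hv; rewrite H1 /= => /hasP[c' Hc' Hle].
  move: Hc'; rewrite mem_occ_cols => /hasP[y Hy /andP[/eqP Ey /eqP Ev]].
  have Hne : occ_cols t (entry t x) != [::].
    apply/eqP => E; have : x.2 \in occ_cols t (entry t x).
      by rewrite mem_occ_cols; apply/hasP; exists x; rewrite ?Hc // !eqxx.
    by rewrite E.
  have := mem_leftmost_col Hne.
  rewrite mem_occ_cols => /hasP[z Hz /andP[/eqP Ez /eqP Evz]].
  by exists z, y; rewrite -Hc; split=> //; rewrite Ez Ey.
- by move=> x Hx; rewrite -Hmax; apply/leq_foldr_maxn/map_f; rewrite Hc.
- have Hne : entries t != [::] by rewrite /entries Hc; case: (diagram la) Hn.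
  have := foldr_maxn_mem Hne; rewrite -/(max_entry t) Hmax => /mapP[x Hx E].
  by exists x; rewrite -?Hc.
Qed.

Lemma qy_map_QYT m la f : qy_map la m f -> is_QYT_eq m la (tabulate f la).
Proof.
case=> Qpos Qrow Qcol Qyam Qle [x0 Hx0 Ex0].
set t := tabulate f la.
have Hsh : Defs.shape t = la by rewrite shape_tabulate.
have Hc : cells t = diagram la by rewrite cells_diagram Hsh.
have Ee (x : nat * nat) : x \in diagram la -> entry t x = f x by exact: entry_tabulate.
have Hent (v : nat) : v \in entries t -> exists2 x, x \in diagram la & v = f x.
  by move=> /mapP[x]; rewrite Hc => Hx ->; exists x; rewrite ?Ee.
apply/and3P; split; [apply/and4P; split | |].
- by rewrite Hsh.
- by rewrite Hc; apply/allP => x Hx; rewrite Ee ?Qpos.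
- apply/allP => row /mapP[r]; rewrite mem_iota => /andP[_ Hr] ->.
  apply/(sortedP 0) => i; rewrite size_map size_iota => Hi.
  rewrite !(nth_map 0) ?size_iota ?(ltnW Hi) // !nth_iota ?(ltnW Hi) //.
  by apply: Qrow; rewrite mem_diagram.
- rewrite Hc; apply/allP => -[r c] Hx /=; apply/implyP => /andP[Hr Hcc].
  have Hb : (r.+1, c) \in diagram la.
    by move: Hcc; rewrite mem_diagram /= -[in X in _ -> X]Hsh (nth_map [::]).
  by rewrite !Ee // Qcol.
- apply/allP => v /Hent [x Hx ->]; apply/implyP => H1.
  have [z [y [Hz Hy Ez Ey Hzy]]] := Qyam _ Hx H1.
  apply/hasP; exists y.2.
    by rewrite mem_occ_cols; apply/hasP; exists y; rewrite ?Hc // eqxx Ee // Ey eqxx.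
  apply: leq_trans Hzy; apply: foldr_minn_leq.
  by rewrite mem_occ_cols; apply/hasP; exists z; rewrite ?Hc // eqxx Ee // Ez eqxx.
- rewrite eqn_leq foldr_maxn_leq; apply/andP; split.
  + by apply/allP => v /Hent [x Hx ->]; apply: Qle.
  + by rewrite -Ex0 -(Ee _ Hx0); apply/leq_foldr_maxn/map_f; rewrite Hc.
Qed.

Lemma mem_rows_upto k m r :
  size r = k -> all (fun x => 0 < x <= m) r -> r \in rows_upto k m.
Proof.
elim: k r => [|k IH] [|x r] //= [Hs] /andP[Hx Hr].
apply/allpairsP; exists (x, r); split => //=; last exact: IH.
by rewrite mem_iota add1n ltnS.
Qed.

Lemma mem_fillings la m t : Defs.shape t = la ->
  (forall row, row \in t -> all (fun x => 0 < x <= m) row) -> t \in fillings la m.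
Proof.
elim: la t => [|a la IH] [|row t] //= [Ha Hsh] Hall.
apply/allpairsP; exists (row, t); split => //=.
- by apply: mem_rows_upto => //; apply: Hall; rewrite mem_head.
- by apply: IH => // r Hr; apply: Hall; rewrite inE Hr orbT.
Qed.

Lemma rows_upto_uniq k m : uniq (rows_upto k m).
Proof.
elim: k => //= k IH; apply: allpairs_uniq => //; first exact: iota_uniq.
by move=> [a b] [c d] _ _ /= [-> ->].
Qed.

Lemma fillings_uniq la m : uniq (fillings la m).
Proof.
elim: la => //= a la IH; apply: allpairs_uniq => //; first exact: rows_upto_uniq.
by move=> [p q] [c d] _ _ /= [-> ->].
Qed.

Lemma QYT_fillings m la t :
  0 < size (diagram la) -> is_QYT_eq m la t -> t \in fillings la m.
Proof.
move=> Hn Ht; have [Hsh Q] := QYT_qy_map Hn Ht.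
apply: mem_fillings => // row /(nthP [::]) [r Hr <-].
apply/allP => x /(nthP 0) [c Hc <-].
have Hrc : (r, c) \in diagram la by rewrite mem_diagram /= -Hsh (nth_map [::]).
by rewrite (qy_pos Q Hrc) (qy_le_max Q Hrc).
Qed.

Lemma nQYT_nat_le_conjugate la mu k : conjugate_shapes la mu -> 0 < size (diagram la) ->
  nQYT_nat la k <= nQYT_nat mu ((size (diagram la)).+1 - k).
Proof.
move=> T Hn; rewrite /nQYT_nat -!size_filter.
pose F t := tabulate (qy_transpose la (entry t)) mu.
rewrite -(size_map F); apply: uniq_leq_size.
- rewrite map_inj_in_uniq ?filter_uniq ?fillings_uniq // => t1 t2.
  rewrite !mem_filter => /andP[H1 _] /andP[H2 _] E.
  have [Sh1 Q1] := QYT_qy_map Hn H1; have [Sh2 Q2] := QYT_qy_map Hn H2.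
  have Ee : {in diagram mu, qy_transpose la (entry t1) =1 qy_transpose la (entry t2)}.
    by move=> y Hy; have := congr1 (entry^~ y) E; rewrite /F !entry_tabulate.
  rewrite -(tabulate_entry t1) -(tabulate_entry t2) Sh1 Sh2.
  exact/eq_in_tabulate/(qy_transpose_inj T Q1 Q2 Ee).
- move=> t' /mapP[t]; rewrite mem_filter => /andP[Ht _] ->.
  have [_ Q] := QYT_qy_map Hn Ht.
  have HQ := qy_map_QYT (qy_transpose_qy T Q).
  by rewrite mem_filter HQ QYT_fillings // (size_diagram_conjugate T).
Qed.

Lemma nQYT_nat_out_of_range la k : weakly_decreasing la ->
  0 < size (diagram la) -> ~~ (0 < k <= size (diagram la)) -> nQYT_nat la k = 0.
Proof.
move=> Hla Hn Hk; apply/eqP; rewrite -leqn0 leqNgt -has_count.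
apply/hasP => -[t _ /(QYT_qy_map Hn) [_ Q]].
by rewrite (qy_range Hla Q) in Hk.
Qed.

Theorem theorem3p3 (n : nat) (la : seq nat) (m : int) :
  is_partition la -> sumn la = n -> 0 < n ->
  nQYT la m = nQYT (conj_part la) ((n.+1)%:Z - m)%R.
Proof.
move=> Hp Hs Hn0; set mu := conj_part la.
have T : conjugate_shapes la mu := conj_part_conjugate Hp.
have Hla := conjugate_weakly_decreasing (conjugate_sym T).
have Hmu := conjugate_weakly_decreasing T.
have Hn : size (diagram la) = n by rewrite size_diagram.
have Hn' : size (diagram mu) = n by rewrite (size_diagram_conjugate T).
case: m => [k|j].
- case: (leqP k n.+1) => Hk.
  + rewrite subzn //=; apply/eqP; rewrite eqn_leq.
    have le1 := nQYT_nat_le_conjugate k T.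
    have le2 := nQYT_nat_le_conjugate (n.+1 - k) (conjugate_sym T).
    rewrite Hn in le1; rewrite Hn' subKn // in le2.
    by rewrite le1 ?le2 ?Hn ?Hn'.
  + have -> : (n.+1%:Z - k%:Z)%R = Negz (k - n.+2) by rewrite NegzE; lia.
    by rewrite /= nQYT_nat_out_of_range // Hn; lia.
- have -> : (n.+1%:Z - Negz j)%R = Posz (n.+1 + j.+1) by rewrite NegzE; lia.
  by rewrite /= nQYT_nat_out_of_range // Hn'; lia.
Qed.
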